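(* Let $S\in\{0,1\}^\infty$. 1. If $\mathrm{Dim}_{\mathrm{FS}}(S)=0$, then $S$ is finite-state shallow. 2. If $S$ is normal (equivalently, $\dim_{\mathrm{FS}}(S)=1$), then $S$ is finite-state shallow.
   Context: A finite-state transducer (FST) is a 4-tuple $T=(Q,\delta,\nu,q_0)$ with $Q$ a nonempty finite set of states, $\delta:Q\times\{0,1\}\to Q$, $\nu:Q\times\{0,1\}\to\{0,1\}^*$, $q_0\in Q$, every state reachable from $q_0$; $\widehat\delta(\lambda)=q_0$, $\widehat\delta(xa)=\delta(\widehat\delta(x),a)$, $T(\lambda)=\lambda$, $T(xa)=T(x)\nu(\widehat\delta(x),a)$. Fix a standard binary representation $\sigma_T$ of each FST, $|T|=|\sigma_T|$, $\mathrm{FST}^{\leq k}=\{T:|T|\le k\}$, and $\mathrm{FS}^k(x)=\min\{|p|:\exists T\in\mathrm{FST}^{\le k},\ T(p)=x\}$. For a sequence $S$, $S\upharpoonright n$ denotes its first $n$ bits. The finite-state dimension and strong dimension are $\dim_{\mathrm{FS}}(S)=\lim_{k\to\infty}\liminf_{n\to\infty}\mathrm{FS}^k(S\upharpoonright n)/n$ and $\mathrm{Dim}_{\mathrm{FS}}(S)=\lim_{k\to\infty}\limsup_{n\to\infty}\mathrm{FS}^k(S\upharpoonright n)/n$. $S$ is normal (in Borel's sense) if for every $k$, every string of length $k$ occurs in $S$ with limiting frequency $2^{-k}$; it is known that $S$ is normal iff $\dim_{\mathrm{FS}}(S)=1$. $S$ is finite-state deep if $(\exists\alpha>0)(\forall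 k\in\mathbb{N})(\exists k'\in\mathbb{N})(\exists^\infty n\in\mathbb{N})\ \mathrm{FS}^k(S\upharpoonright n)-\mathrm{FS}^{k'}(S\upharpoonright n)\ge\alpha n$; $S$ is finite-state shallow if it is not finite-state deep. *)

From HB Require Import structures.
From mathcomp Require Import all_boot all_order all_algebra.
From mathcomp Require Import all_classical all_reals.
From mathcomp Require Import ereal topology normedtype sequences.

Set Implicit Arguments.
Unset Strict Implicit.
Unset Printing Implicit Defensive.

Import Order.TTheory GRing.Theory Num.Theory.
Import numFieldNormedType.Exports.
Local Open Scope classical_set_scope.
Local Open Scope ring_scope.

(* States are 'I_(fst_n T).+1 (a nonempty finite set); bits are bool
   (false = 0, true = 1). *)
Record FST := MkFST {
  fst_n : nat;
  fst_delta : 'I_fst_n.+1 -> bool -> 'I_fst_n.+1;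
  fst_nu : 'I_fst_n.+1 -> bool -> seq bool;
  fst_q0 : 'I_fst_n.+1 }.

Definition delta_hat (T : FST) (x : seq bool) : 'I_(fst_n T).+1 :=
  foldl (fun q a => fst_delta q a) (fst_q0 T) x.

Definition reachable (T : FST) : Prop :=
  forall q : 'I_(fst_n T).+1, exists x : seq bool, delta_hat T x = q.

Fixpoint run_from (T : FST) (q : 'I_(fst_n T).+1) (x : seq bool) : seq bool :=
  match x with
  | [::] => [::]
  | a :: x' => fst_nu q a ++ run_from (fst_delta q a) x'
  end.

Definition fst_out (T : FST) (x : seq bool) : seq bool := run_from (fst_q0 T) x.

Definition code_nat (j : nat) : seq bool := rcons (nseq j true) false.
Definition code_str (w : seq bool) : seq bool :=
  rcons (flatten [seq [:: true; b] | b <- w]) false.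

Definition fst_code (T : FST) : seq bool :=
  code_nat (fst_n T) ++ code_nat (fst_q0 T) ++
  flatten [seq code_nat (fst_delta q a) ++ code_str (fst_nu q a)
          | q <- enum 'I_(fst_n T).+1, a <- [:: false; true]].

Definition fst_size (T : FST) : nat := size (fst_code T).

(* FS^k(x) = min { |p| : exists T, |T| <= k, T(p) = x }, as an extended
   real; it is +oo when no transducer of size <= k outputs x. *)
Definition FS {R : realType} (k : nat) (x : seq bool) : \bar R :=
  ereal_inf [set ((size p)%:R)%:E | p in
     [set p : seq bool | exists T : FST,
        [/\ reachable T, (fst_size T <= k)%N & fst_out T p = x]]].

Definition prefix (S : nat -> bool) (n : nat) : seq bool := mkseq S n.

Definition FS_ratio {R : realType} (S : nat -> bool) (k n : nat) : \bar R :=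
  (@FS R k (prefix S n) * ((n%:R : R)^-1)%:E)%E.

Definition dimFS {R : realType} (S : nat -> bool) : \bar R :=
  limn (fun k => limn_einf (fun n => @FS_ratio R S k n)).

Definition DimFS {R : realType} (S : nat -> bool) : \bar R :=
  limn (fun k => limn_esup (fun n => @FS_ratio R S k n)).

(* number of (possibly overlapping) occurrences of w in S|n *)
Definition occ (S : nat -> bool) (w : seq bool) (n : nat) : nat :=
  count (fun i => mkseq (fun j => S (i + j)%N) (size w) == w)
        (iota 0 (n.+1 - size w)).

Definition normal {R : realType} (S : nat -> bool) : Prop :=
  forall w : seq bool,
    (fun n : nat => ((occ S w n)%:R / n%:R : R)) @ \oo --> ((2%:R : R) ^- size w).

Definition fs_deep {R : realType} (S : nat -> bool) : Prop :=
  exists alpha : R, 0 < alpha /\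
    forall k : nat, exists k' : nat,
      forall N : nat, exists n : nat, (N <= n)%N /\
        (@FS R k (prefix S n) - @FS R k' (prefix S n) >= (alpha * n%:R)%:E)%E.

Definition fs_shallow {R : realType} (S : nat -> bool) : Prop := ~ @fs_deep R S.

From Pilot Require Import Defs.
From HB Require Import structures.
From mathcomp Require Import all_boot all_order all_algebra.
From mathcomp Require Import all_classical all_reals.
From mathcomp Require Import ereal topology normedtype sequences.
From mathcomp Require Import zify ring lra.

Set Implicit Arguments.
Unset Strict Implicit.
Unset Printing Implicit Defensive.

Import Order.TTheory GRing.Theory Num.Theory.
Import numFieldNormedType.Exports.

(* Part 1: since FS^k' >= 0, we have FS^k - FS^k' <= FS^k, and Dim_FS(S) = 0
   yields a k with FS^k(S|n) < alpha n for all large n.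

   Part 2: the identity transducer gives FS^k(S|n) <= n for k >= 10, so it
   suffices that for normal S and every k, a transducer of size <= k needs an
   input of length >= (1 - eps) n to output S|n.  Look at the windows of length
   L+1 of the output y = T(p).  The input bits emitting the window at position
   i form a segment of p, and the lengths of these segments over all i
   telescope to at most L |p| + n.  A window emitted by a segment of length at
   most J is determined by the transition table of T, a state, an offset and
   the segment, so there are at most C (J+1) 2^J such cheap windows, with C
   depending only on k, among the 2^(L+1) strings of length L+1; by normality
   they occur at a correspondingly small fraction of positions, and every other
   window costs more than J input bits.  Choosing L = d M and J = L - d with
   C M^2 d <= 2^d makes both losses at most n / M. *)

Lemma sum_shift_sub_le (f : nat -> nat) N L P :
  (forall i j, i <= j -> j < N + L -> f i <= f j) ->
  (forall j, j < N + L -> f j <= P) ->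
  \sum_(i < N) (f (i + L) - f i) <= L * P.
Proof.
move=> f_mono f_le.
have shift N' : N' <= N ->
    \sum_(i < N') (f (i + L) - f i) + \sum_(i < L) f i = \sum_(i < L) f (N' + i).
  elim: N' => [|N' IH] le_N'; first by rewrite big_ord0.
  have recN : \sum_(i < N'.+1) (f (i + L) - f i) =
      \sum_(i < N') (f (i + L) - f i) + (f (N' + L) - f N') by rewrite big_ord_recr.
  rewrite recN addnAC IH ?(ltnW le_N') //.
  have recl : \sum_(i < L.+1) f (N' + i) = f N' + \sum_(i < L) f (N'.+1 + i).
    by rewrite big_ord_recl addn0; congr (_ + _); apply: eq_bigr => i _; rewrite addSnnS.
  have recr : \sum_(i < L.+1) f (N' + i) = \sum_(i < L) f (N' + i) + f (N' + L).
    by rewrite big_ord_recr.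
  have le_f : f N' <= f (N' + L) by apply: f_mono; lia.
  lia.
have := shift N (leqnn N).
have : \sum_(i < L) f (N + i) <= \sum_(i < L) P.
  by apply: leq_sum => i _; apply: f_le; rewrite ltn_add2l.
rewrite sum_nat_const card_ord; lia.
Qed.

Lemma mul_count_gt_le_sum (g : nat -> nat) J N :
  J.+1 * count (fun i => J < g i) (iota 0 N) <= \sum_(i < N) g i.
Proof.
rewrite -sum1_count big_distrr -(big_mkord xpredT) /index_iota subn0 big_mkcond.
by apply: leq_sum => i _; case: ifP => // /= gt_J; rewrite muln1.
Qed.

Lemma count_mem_uniq_sum (T : eqType) (D : seq T) (g : nat -> T) (s : seq nat) :
  uniq D -> count (fun i => g i \in D) s = \sum_(x <- D) count (fun i => g i == x) s.
Proof.
elim: D => [|x D IH] /=; first by rewrite big_nil; elim: s.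
case/andP => xD uD; rewrite big_cons -IH //.
elim: s {IH} => //= i s IHs; rewrite in_cons IHs.
by case: eqP => [->|_]; rewrite ?(negbTE xD) /=; lia.
Qed.

(** * Runs of a transducer *)

Section Runs.
Variable T : FST.
Local Notation state := 'I_(fst_n T).+1.

Definition delta_from (q : state) (u : seq bool) : state :=
  foldl (fun q a => fst_delta q a) q u.

Lemma run_from_cat q u v :
  run_from q (u ++ v) = run_from q u ++ run_from (delta_from q u) v.
Proof. by elim: u q => //= a u IH q; rewrite IH catA. Qed.

Definition out_len (q : state) (p : seq bool) (t : nat) : nat :=
  size (run_from q (take t p)).

Lemma out_len0 q p : out_len q p 0 = 0.
Proof. by rewrite /out_len take0. Qed.

Lemma out_len_size q p : out_len q p (size p) = size (run_from q p).
Proof. by rewrite /out_len take_size. Qed.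

Lemma out_len_mono q p : {homo out_len q p : t t' / t <= t'}.
Proof.
move=> t t' le_tt'; rewrite /out_len -(subnKC le_tt') takeD run_from_cat size_cat.
exact: leq_addr.
Qed.

Lemma out_lenS q p t : t < size p ->
  out_len q p t.+1 = out_len q p t + size (fst_nu (delta_from q (take t p)) (nth false p t)).
Proof.
by move=> tp; rewrite /out_len (take_nth false tp) -cats1 run_from_cat size_cat /= cats0.
Qed.

Definition emitter (q : state) (p : seq bool) (i : nat) : nat :=
  find (fun t => i < out_len q p t.+1) (iota 0 (size p)).

Lemma emitterP q p i : i < size (run_from q p) ->
  [/\ emitter q p i < size p, out_len q p (emitter q p i) <= i
    & i < out_len q p (emitter q p i).+1].
Proof.
move=> ip; have p_gt0 : 0 < size p by case: p ip.
set P := fun t => i < out_len q p t.+1.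
have has_emit : has P (iota 0 (size p)).
  apply/hasP; exists (size p).-1; first by rewrite mem_iota add0n ltn_predL.
  by rewrite /P prednK // out_len_size.
have ep : emitter q p i < size p by move: has_emit; rewrite has_find size_iota.
split => //; last first.
  by have := nth_find 0 has_emit; rewrite -/(emitter q p i) nth_iota ?add0n.
case E: (emitter q p i) => [|t]; first by rewrite out_len0.
have := @before_find _ 0 P (iota 0 (size p)) t.
rewrite -/(emitter q p i) E ltnSn nth_iota ?add0n; last by rewrite -E ltnW.
by move/(_ isT)/negbT; rewrite -leqNgt.
Qed.

Lemma emitter_mono q p i i' : i <= i' -> i' < size (run_from q p) ->
  emitter q p i <= emitter q p i'.
Proof.
move=> ii' i'p; have [_ le_i _] := emitterP (leq_ltn_trans ii' i'p).
have [_ _ lt_i'] := emitterP i'p.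
rewrite leqNgt; apply/negP => /(out_len_mono q p) le_out.
by have := leq_trans lt_i' (leq_trans le_out (leq_trans le_i ii')); rewrite ltnn.
Qed.

Variable c : nat.
Hypothesis size_nu_le : forall (q : state) a, size (fst_nu q a) <= c.

Lemma output_window q p i L : i + L < size (run_from q p) ->
  exists (q' : state) o w,
    [/\ o < c, size w = (emitter q p (i + L) - emitter q p i).+1
      & take L.+1 (drop i (run_from q p)) = take L.+1 (drop o (run_from q' w))].
Proof.
move=> iL; have ip : i < size (run_from q p) by apply: leq_ltn_trans iL; exact: leq_addr.
have [lt_t1 le_out_t1 lt_out_t1] := emitterP ip.
have [lt_t2 _ lt_out_t2] := emitterP iL.
have le_t12 : emitter q p i <= emitter q p (i + L).
  by apply: emitter_mono => //; exact: leq_addr.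
set t1 := emitter q p i in lt_t1 le_out_t1 lt_out_t1 le_t12 *.
set t2 := emitter q p (i + L) in lt_t2 lt_out_t2 le_t12 *.
set w := take (t2.+1 - t1) (drop t1 p).
exists (delta_from q (take t1 p)), (i - out_len q p t1), w.
have pE : p = take t1 p ++ w ++ drop t2.+1 p.
  by rewrite /w -{2}(subnK (leqW le_t12)) -drop_drop !cat_take_drop.
have out_t2 : out_len q p t2.+1 =
    out_len q p t1 + size (run_from (delta_from q (take t1 p)) w).
  rewrite /out_len {1}pE catA take_size_cat ?run_from_cat ?size_cat //.
  rewrite size_takel ?(ltnW lt_t1) // /w size_takel ?size_drop; lia.
set out_w := run_from _ w in out_t2.
split.
- have := out_lenS q lt_t1; have := size_nu_le (delta_from q (take t1 p)) (nth false p t1).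
  rewrite -/t1; lia.
- rewrite /w size_takel ?size_drop; lia.
- rewrite {1}pE !run_from_cat drop_cat -/(out_len q p t1) ltnNge le_out_t1 /= -/out_w.
  have offset_lt : i - out_len q p t1 < size out_w by lia.
  by rewrite drop_cat offset_lt takel_cat // size_drop; lia.
Qed.

End Runs.

(** * Cheap windows *)

(* Transition tables with [K] states and outputs of length at most [c] form a
   finite type; this is what bounds the number of windows that short input
   segments can produce. *)
Section Tables.
Variables K c : nat.

Definition table := {ffun 'I_K * bool -> 'I_K * c.-bseq bool}.

Fixpoint run_table (tb : table) (q : 'I_K) (w : seq bool) : seq bool :=
  if w is a :: w' then (tb (q, a)).2 ++ run_table tb (tb (q, a)).1 w' else [::].

Variables J L : nat.

Definition window_source := (table * 'I_K * 'I_c * 'I_J.+1 * J.-tuple bool)%type.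

Definition source_window (d : window_source) : seq bool :=
  let: (tb, q, o, j, w) := d in take L (drop o (run_table tb q (take j w))).

Definition cheap_windows : seq (seq bool) :=
  [seq x <- undup [seq source_window d | d : window_source] | size x == L].

Lemma cheap_windows_uniq : uniq cheap_windows.
Proof. exact/filter_uniq/undup_uniq. Qed.

Lemma size_cheap_windows_mem x : x \in cheap_windows -> size x = L.
Proof. by rewrite mem_filter => /andP [/eqP]. Qed.

Lemma size_cheap_windows : size cheap_windows <= #|{: table}| * K * c * J.+1 * 2 ^ J.
Proof.
rewrite size_filter (leq_trans (count_size _ _)) // (leq_trans (size_undup _)) //.
by rewrite size_map -cardE !card_prod !card_ord card_tuple card_bool.
Qed.

Section TableOfFST.
Variable T : FST.
Hypothesis states_le : (fst_n T).+1 <= K.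
Hypothesis size_nu_le : forall (q : 'I_(fst_n T).+1) a, size (fst_nu q a) <= c.

Definition table_of_fst : table :=
  [ffun qa : 'I_K * bool =>
    if qa.1 < (fst_n T).+1 then
      let q := inord qa.1 : 'I_(fst_n T).+1 in
      (widen_ord states_le (fst_delta q qa.2), insub_bseq c (fst_nu q qa.2))
    else (qa.1, [bseq])].

Lemma run_table_of_fst q w : run_table table_of_fst (widen_ord states_le q) w = run_from q w.
Proof.
elim: w q => //= a w IH q; rewrite ffunE /= ltn_ord inord_val /= IH.
by rewrite /insub_bseq insubdK //; exact: size_nu_le.
Qed.

Lemma mem_cheap_windows (q : 'I_(fst_n T).+1) o w :
  o < c -> size w <= J -> size (take L (drop o (run_from q w))) = L ->
  take L (drop o (run_from q w)) \in cheap_windows.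
Proof.
move=> oc wJ sizeL; rewrite mem_filter sizeL eqxx mem_undup.
have pad_size : size (w ++ nseq (J - size w) false) == J.
  by rewrite size_cat size_nseq subnKC.
apply/mapP; exists (table_of_fst, widen_ord states_le q, Ordinal oc,
  Ordinal (wJ : size w < J.+1), Tuple pad_size) => /=; first by rewrite mem_enum.
by rewrite take_size_cat // run_table_of_fst.
Qed.

End TableOfFST.
End Tables.

Lemma size_code_str w : size (code_str w) = (size w).*2.+1.
Proof. by rewrite /code_str size_rcons; elim: w => //= a w ->; rewrite doubleS. Qed.

Lemma fst_n_lt_size T : fst_n T < fst_size T.
Proof.
by rewrite /fst_size /fst_code size_cat /code_nat size_rcons size_nseq ltnS leq_addr.
Qed.

Lemma size_fst_nu_lt T (q : 'I_(fst_n T).+1) a : size (fst_nu q a) < fst_size T.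
Proof.
rewrite /fst_size /fst_code !size_cat size_flatten sumnE big_map.
set qa_code := code_nat (fst_delta q a) ++ code_str (fst_nu q a).
have qa_in : qa_code \in [seq code_nat (fst_delta q a) ++ code_str (fst_nu q a)
                          | q <- enum 'I_(fst_n T).+1, a <- [:: false; true]].
  by apply/allpairsP; exists (q, a); split; rewrite ?mem_enum //; case: (a).
rewrite (big_rem _ qa_in) /= size_cat size_code_str; lia.
Qed.

Definition fst_id : FST := @MkFST 0 (fun q _ => q) (fun _ a => [:: a]) ord0.

Lemma fst_id_reachable : reachable fst_id.
Proof. by move=> q; exists [::]; apply/val_inj; case: q => [[]]. Qed.

Lemma fst_id_size : fst_size fst_id = 10.
Proof. by rewrite /fst_size /fst_code /= enum_ordSl enum_ord0. Qed.

Lemma fst_id_out p : fst_out fst_id p = p.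
Proof. by rewrite /fst_out; elim: p => //= a p ->. Qed.

Section Windows.
Variables (k : nat) (T : FST) (p : seq bool) (L J : nat).
Hypothesis T_small : fst_size T <= k.

Local Notation y := (fst_out T p).
Local Notation N := (size y - L).
Local Notation window i := (take L.+1 (drop i y)).
Local Notation cheap := (cheap_windows k.+1 k J L.+1).
Local Notation emit := (emitter (fst_q0 T) p).
Local Notation cost i := (emit (i + L) - emit i).+1.

Lemma window_cheap_or_costly i : i < N -> (window i \in cheap) || (J < cost i).
Proof.
move=> iN.
have states_le : (fst_n T).+1 <= k.+1 by have := fst_n_lt_size T; lia.
have nu_le (q : 'I_(fst_n T).+1) a : size (fst_nu q a) <= k by have := size_fst_nu_lt q a; lia.
have iL : i + L < size (run_from (fst_q0 T) p) by rewrite -/(fst_out T p); lia.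
have [q [o [w [oc size_w window_eq]]]] := output_window nu_le iL.
case: (leqP (cost i) J) => [cost_le|]; last by rewrite orbT.
rewrite /fst_out window_eq (mem_cheap_windows states_le nu_le) ?size_w //.
by rewrite -window_eq size_takel // size_drop -/(fst_out T p); lia.
Qed.

Lemma sum_cost_le : \sum_(i < N) cost i <= L * size p + N.
Proof.
have [-> | N_gt0] := posnP N; first by rewrite big_ord0.
under eq_bigr do rewrite -addn1.
rewrite big_split /= sum_nat_const card_ord muln1 leq_add2r.
apply: sum_shift_sub_le => [i j le_ij lt_j | j lt_j].
  by apply: emitter_mono => //; rewrite -/(fst_out T p); lia.
have : j < size (run_from (fst_q0 T) p) by rewrite -/(fst_out T p); lia.
by case/emitterP => /ltnW.
Qed.

Lemma expensive_windows_le :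
  J.+1 * count (fun i => window i \notin cheap) (iota 0 N) <= L * size p + N.
Proof.
apply: leq_trans (sum_cost_le); apply: leq_trans (mul_count_gt_le_sum (fun i => cost i) J N).
rewrite leq_mul2l -(@eq_in_count _ (fun i => (window i \notin cheap) && (J < cost i))).
  by apply/orP; right; apply: sub_count => i /andP [].
move=> i; rewrite mem_iota add0n => /andP [_ iN].
by case/orP: (window_cheap_or_costly iN) => [-> // | ->]; rewrite andbT.
Qed.

End Windows.

Lemma exists_mul_le_exp2 A : exists2 d, 0 < d & A * d <= 2 ^ d.
Proof.
exists (A.+1).*2 => //; rewrite -addnn expnD expnS.
have := ltn_expl A (isT : 1 < 2); nia.
Qed.

Lemma cheap_windows_sparse k M : 0 < M -> exists J L,
  [/\ J < L, (L - J) * M = L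
    & J.+1 * size (cheap_windows k.+1 k J L.+1) * M <= L * 2 ^ L.+1].
Proof.
move=> M_gt0; set C := #|{: table k.+1 k}| * k.+1 * k.
have [d d_gt0 le_d] := exists_mul_le_exp2 (C * M * M).
set L := d * M; have le_dL : d <= L by rewrite leq_pmulr.
exists (L - d), L; split; [lia | by rewrite subKn |].
have size_le : size (cheap_windows k.+1 k (L - d) L.+1) <= C * L * 2 ^ (L - d).
  apply: leq_trans (size_cheap_windows _ _ _ _) _; rewrite -/C leq_mul2r leq_mul2l; lia.
have exp_split : 2 ^ L = 2 ^ (L - d) * 2 ^ d by rewrite -expnD subnK.
apply: (@leq_trans (L * (C * L * 2 ^ (L - d)) * M)).
  by rewrite leq_mul2r leq_mul ?orbT // ltn_subrL d_gt0 (leq_trans d_gt0).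
have -> : L * (C * L * 2 ^ (L - d)) * M = L * 2 ^ (L - d) * (C * M * M * d).
  by rewrite /L; ring.
apply: (@leq_trans (L * 2 ^ (L - d) * 2 ^ d)); first by rewrite leq_mul2l le_d orbT.
rewrite expnS exp_split; set X := 2 ^ (L - d) * 2 ^ d; rewrite -mulnA -/X; lia.
Qed.

(** * Normal sequences are incompressible by finite-state transducers *)

Lemma take_drop_mkseq (f : nat -> bool) n i l : i + l <= n ->
  take l (drop i (mkseq f n)) = mkseq (fun j => f (i + j)) l.
Proof.
move=> iln; rewrite /mkseq -map_drop -map_take drop_iota take_iota add0n.
rewrite (minn_idPl _) ?leq_subRL ?(leq_trans (leq_addr _ _) iln) //.
by rewrite -[in LHS](addn0 i) iotaDl -map_comp.
Qed.

Lemma count_windows_prefix (S : nat -> bool) n L (D : seq (seq bool)) :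
  uniq D -> (forall x, x \in D -> size x = L.+1) ->
  count (fun i => take L.+1 (drop i (Defs.prefix S n)) \in D) (iota 0 (n - L)) =
  \sum_(x <- D) occ S x n.
Proof.
move=> uniqD sizeD; rewrite count_mem_uniq_sum // big_seq [RHS]big_seq.
apply: eq_bigr => x xD; rewrite /occ sizeD // subSS; apply: eq_in_count => i.
by rewrite mem_iota add0n => /andP [_ lt_i]; rewrite take_drop_mkseq //; lia.
Qed.

Local Open Scope classical_set_scope.
Local Open Scope ring_scope.

Lemma input_length_lb (R : realFieldType) (n P L J C beta eps M : R) :
  0 <= J -> J + 1 <= L -> (L - J) * M = L -> 4 <= eps * M ->
  (J + 1) * beta * M <= L -> 0 < eps -> 0 <= beta -> 0 <= n -> 4 * L <= eps * n ->
  C <= (beta + eps / 4) * n -> (J + 1) * (n - L - C) <= L * P + (n - L) ->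
  (1 - eps) * n <= P.
Proof.
move=> J_ge0 JL LJM epsM betaM eps_gt0 beta_ge0 n_ge0 Ln C_le count_le.
have L_gt0 : 0 < L by lra.
(* Each of the four error terms is at most [eps * L * n / 4]. *)
have drop_le : (L - J) * n * 4 <= eps * L * n.
  have -> : eps * L * n = (L - J) * n * (eps * M) by rewrite -{1}LJM; ring.
  by rewrite ler_wpM2l ?mulr_ge0 //; lra.
have overlap_le : J * L * 4 <= eps * L * n.
  by have := ler_wpM2l (ltW L_gt0) Ln; nra.
have beta_le : (J + 1) * beta * n * 4 <= eps * L * n.
  have : (J + 1) * beta * n * 4 <= (J + 1) * beta * n * (eps * M).
    by rewrite ler_wpM2l ?mulr_ge0 //; lra.
  by have := ler_wpM2l (mulr_ge0 (ltW eps_gt0) n_ge0) betaM; nra.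
have cheap_le : (J + 1) * C * 4 <= (J + 1) * beta * n * 4 + eps * L * n by nra.
by rewrite -(ler_pM2l L_gt0); lra.
Qed.

Lemma normal_windows_cvg (R : realType) (S : nat -> bool) (D : seq (seq bool)) l :
  @normal R S -> (forall x, x \in D -> size x = l) ->
  (\sum_(x <- D) ((occ S x n)%:R / n%:R : R)) @[n --> \oo] -->
    ((size D)%:R * 2%:R ^- l : R).
Proof.
move=> normalS sizeD.
have -> : (size D)%:R * 2%:R ^- l = \sum_(x <- D) (2%:R ^- size x : R).
  rewrite (eq_big_seq (fun _ => 2%:R ^- l)) => [|x /sizeD -> //].
  by rewrite big_const_seq count_predT iter_addr_0 mulr_natl.
by apply: cvg_big => [|x _]; [exact: add_continuous | exact: normalS].
Qed.

Lemma normal_input_length_lb (R : realType) (S : nat -> bool) k (eps : R) :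
  0 < eps -> @normal R S ->
  \forall n \near \oo, forall T p, (fst_size T <= k)%N -> fst_out T p = Defs.prefix S n ->
    (1 - eps) * n%:R <= (size p)%:R.
Proof.
move=> eps_gt0 normalS.
set M := (Num.truncn (4 / eps)).+1.
have epsM : 4 <= eps * M%:R by rewrite -ler_pdivrMl // mulrC; exact/ltW/truncnS_gt.
have [J [L [JL LJM sparse]]] := cheap_windows_sparse k (ltn0Sn (Num.truncn (4 / eps))).
set D := cheap_windows k.+1 k J L.+1 in sparse *.
have sizeD := @size_cheap_windows_mem k.+1 k J L.+1.
set beta : R := (size D)%:R * 2%:R ^- L.+1.
have betaM : (J%:R + 1) * beta * M%:R <= L%:R.
  have -> : (J%:R + 1) * beta * M%:R = (J.+1 * size D * M)%:R / (2 ^ L.+1)%:R.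
    by rewrite /beta natrX !natrM -natr1; ring.
  by rewrite ler_pdivrMr ?ltr0n ?expn_gt0 // -natrM ler_nat.
have eps4 : beta < beta + eps / 4 by rewrite ltrDl divr_gt0.
have freq_le : \forall n \near \oo, \sum_(x <- D) ((occ S x n)%:R / n%:R) <= beta + eps / 4.
  exact: (@cvgr_le _ _ _ eventually_filter _ _ (normal_windows_cvg normalS sizeD) _ eps4).
near=> n => T p T_small out_eq.
have LMn : (L * M < n)%N by near: n; exact: nbhs_infty_gt.
have freq_n : \sum_(x <- D) ((occ S x n)%:R / n%:R) <= beta + eps / 4.
  by near: n; exact: freq_le.
have n_gt0 : (0 < n)%N by lia.
have Ln : (L <= n)%N by apply: leq_trans (ltnW LMn); rewrite leq_pmulr.
set C := (\sum_(x <- D) occ S x n)%N.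
have := expensive_windows_le p L J T_small; rewrite out_eq size_mkseq.
set E := count _ _ => E_le.
have CE : (C + E = n - L)%N.
  rewrite /C -(count_windows_prefix S n (cheap_windows_uniq _ _ _ _) sizeD).
  rewrite -[RHS](size_iota 0).
  exact: count_predC.
apply: (@input_length_lb _ n%:R _ L%:R J%:R C%:R beta eps M%:R) => //.
- by rewrite natr1 ler_nat.
- by rewrite -natrB ?(ltnW JL) // -natrM LJM.
- by rewrite /beta mulr_ge0 // invr_ge0 exprn_ge0.
- apply: le_trans (ler_wpM2r (ler0n _ L) epsM) _.
  by rewrite -mulrA ler_pM2l // -natrM ler_nat mulnC ltnW.
- by rewrite -ler_pdivrMr ?ltr0n // natr_sum mulr_suml.
- have C_le : (C <= n - L)%N by rewrite -CE leq_addr.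
  move: E_le; rewrite -(@ler_nat R) -[E](addKn C) CE natrD !natrM -natr1 !natrB //.
Unshelve. all: by end_near.
Qed.

(** * Finite-state depth *)

Section FSBounds.
Variable R : realType.
Local Open Scope ereal_scope.

Lemma FS_ge0 k x : 0 <= @FS R k x.
Proof. by apply: le_ereal_inf_tmp => _ [p _ <-]; rewrite lee_fin. Qed.

Lemma FS_nonincreasing k k' x : (k <= k')%N -> @FS R k' x <= FS k x.
Proof.
move=> le_kk'; apply: ereal_inf_le_tmp => _ [p [T [reachT sizeT outT]] <-].
by exists p => //; exists T; split => //; exact: leq_trans le_kk'.
Qed.

Lemma FS_le_size k x : (10 <= k)%N -> @FS R k x <= (size x)%:R%:E.
Proof.
move=> k_ge10; apply: ereal_inf_lbound; exists x => //; exists fst_id.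
by split; [exact: fst_id_reachable | rewrite fst_id_size | exact: fst_id_out].
Qed.

Lemma lb_FS k x (a : R) :
  (forall T p, (fst_size T <= k)%N -> fst_out T p = x -> (a <= (size p)%:R)%R) ->
  a%:E <= @FS R k x.
Proof.
by move=> lb; apply: le_ereal_inf_tmp => _ [p [T [_ sizeT outT]] <-]; rewrite lee_fin (lb T).
Qed.

Lemma FS_sub_le k k' x : @FS R k x - FS k' x <= FS k x.
Proof. by rewrite -[leRHS]sube0 leeB // FS_ge0. Qed.

End FSBounds.

Lemma le_limn_esup (R : realType) (u v : (\bar R)^nat) :
  (forall n, (u n <= v n)%E) -> (limn_esup u <= limn_esup v)%E.
Proof.
move=> le_uv; rewrite !limn_esup_lim; apply: lee_lim; [exact: is_cvg_esups.. |].
near=> m; apply: ge_ereal_sup => _ [n /= le_mn <-].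
by apply: le_trans (le_uv n) _; apply: ereal_sup_ubound; exists n.
Unshelve. all: by end_near.
Qed.

Lemma limn_esup_lt (R : realType) (u : (\bar R)^nat) (a : \bar R) :
  (limn_esup u < a)%E -> \forall n \near \oo, (u n < a)%E.
Proof.
rewrite limn_esup_lim (cvg_lim _ (@cvg_esups_inf _ u)) //.
case/ereal_inf_lt => _ [m _ <-] lt_a; exists m => // n le_mn.
by apply: le_lt_trans lt_a; apply: ereal_sup_ubound; exists n.
Qed.

Lemma nonincreasing_limn_lt (R : realType) (u : (\bar R)^nat) (a : \bar R) :
  nonincreasing_seq u -> (limn u < a)%E -> exists k, (u k < a)%E.
Proof.
move=> u_noninc; rewrite (cvg_lim _ (ereal_nonincreasing_cvgn u_noninc)) //.
by case/ereal_inf_lt => _ [k _ <-]; exists k.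
Qed.

Lemma DimFS_eq0_shallow (R : realType) (S : nat -> bool) :
  @DimFS R S = 0%:E -> @fs_shallow R S.
Proof.
move=> DimS [alpha [alpha_gt0 deep]].
pose g k := limn_esup (fun n => @FS_ratio R S k n).
have g_noninc : nonincreasing_seq g.
  move=> k k' le_kk'; apply: le_limn_esup => n.
  by apply: lee_wpmul2r; [rewrite lee_fin invr_ge0 | exact: FS_nonincreasing].
have [k g_lt] : exists k, (g k < alpha%:E)%E.
  by apply: nonincreasing_limn_lt => //; rewrite [limn _]DimS lte_fin.
have [k' deep_k] := deep k.
case: (limn_esup_lt g_lt) => N _ ratio_lt.
have [n [lt_Nn gap]] := deep_k N.+1.
have n_neq0 : n%:R != 0 :> R by rewrite pnatr_eq0 -lt0n (leq_trans _ lt_Nn).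
have : (alpha%:E <= FS_ratio S k n)%E.
  rewrite /FS_ratio -[alpha](mulfK n_neq0) EFinM.
  apply: lee_wpmul2r; first by rewrite lee_fin invr_ge0.
  exact: le_trans gap (FS_sub_le _ _ _ _).
by rewrite leNgt ratio_lt //=; exact: ltnW.
Qed.

Lemma normal_shallow (R : realType) (S : nat -> bool) : @normal R S -> @fs_shallow R S.
Proof.
move=> normalS [alpha [alpha_gt0 deep]].
have [k' deep_k'] := deep 10%N.
have half_gt0 : 0 < alpha / 2 by rewrite divr_gt0.
case: (normal_input_length_lb k' half_gt0 normalS) => N _ length_lb.
have [n [lt_Nn gap]] := deep_k' N.+1.
have : (FS 10 (Defs.prefix S n) - FS k' (Defs.prefix S n) <=
        (n%:R - (1 - alpha / 2) * n%:R)%:E)%E.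
  rewrite EFinB; apply: leeB; last exact/lb_FS/length_lb/ltnW.
  by have := FS_le_size R (Defs.prefix S n) (leqnn 10); rewrite size_mkseq.
move/(le_trans gap); rewrite lee_fin.
have : 0 < alpha * n%:R by rewrite mulr_gt0 // ltr0n (leq_trans _ lt_Nn).
lra.
Qed.

Theorem proposition1 (R : realType) (S : nat -> bool) :
  (@DimFS R S = 0%:E -> @fs_shallow R S) /\
  (@normal R S -> @fs_shallow R S).
Proof. by split; [exact: DimFS_eq0_shallow | exact: normal_shallow]. Qed.
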